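(* Let $N\cong\mathbb{Z}^3$ and let $P$ be a minimal Fano polytope in $N_\mathbb{R}$ which contains two triangles $T_1,T_2$, whose vertices are vertices of $P$, lying in distinct two-dimensional linear subspaces $L_1\ne L_2$, such that $T_1$ is equivalent (under an isomorphism of lattices $\mathbb{Z}^2\to N\cap L_1$) to $\mathrm{conv}\{(1,0),(0,1),(-1,-1)\}$ and $T_2$ is equivalent (under an isomorphism $\mathbb{Z}^2\to N\cap L_2$) to $\mathrm{conv}\{(1,0),(0,1),(-2,-1)\}$. Then, up to the action of $GL(3,\mathbb{Z})$, $P$ is the convex hull of the columns of $$\begin{pmatrix}1&0&0&-2&-1\\0&1&0&-1&0\\0&0&1&0&-1\end{pmatrix}.$$
   Context: A Fano polytope is a three-dimensional convex polytope $P\subset N_\mathbb{R}$ with vertices in $N$ such that the origin is the only lattice point in the interior of $P$. It is minimal if, for every vertex $\rho$ of $P$, the polytope $\mathrm{conv}((P\cap N)\setminus\{\rho\})$ is not a Fano polytope. Polytopes are identified up to $GL(3,\mathbb{Z})$ (after choosing a basis of $N$). *)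

From HB Require Import structures.
From mathcomp Require Import all_boot all_order all_algebra.
From mathcomp Require Import reals.
Set Implicit Arguments. Unset Strict Implicit. Unset Printing Implicit Defensive.
Import Order.TTheory GRing.Theory Num.Theory.
Local Open Scope ring_scope.

Definition lat {R : realType} (v : 'cV[int]_3) : 'cV[R]_3 :=
  map_mx (fun z : int => z%:~R) v.

Definition vec3 (a b c : int) : 'cV[int]_3 := \col_i (nth 0 [:: a; b; c] i).

Definition conv {R : realType} (A : 'cV[R]_3 -> Prop) (x : 'cV[R]_3) : Prop :=
  exists (n : nat) (p : 'I_n -> 'cV[R]_3) (w : 'I_n -> R),
    (forall i, A (p i)) /\ (forall i, 0 <= w i) /\
    \sum_(i < n) w i = 1 /\ x = \sum_(i < n) w i *: p i.

(* Topological interior in R^3 (sup-norm balls; same topology as Euclidean). *)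
Definition interior3 {R : realType} (P : 'cV[R]_3 -> Prop) (x : 'cV[R]_3) : Prop :=
  exists e : R, 0 < e /\
    forall y : 'cV[R]_3, (forall i, `|y i 0 - x i 0| < e) -> P y.

Definition is_vertex {R : realType} (P : 'cV[R]_3 -> Prop) (x : 'cV[R]_3) : Prop :=
  P x /\ forall (y z : 'cV[R]_3) (t : R), P y -> P z -> 0 < t -> t < 1 ->
    x = t *: y + (1 - t) *: z -> y = z.

Definition lattice_polytope {R : realType} (P : 'cV[R]_3 -> Prop) : Prop :=
  exists s : seq 'cV[int]_3,
    forall x, P x <-> conv (fun y => exists2 v, v \in s & y = lat v) x.

(* Fano polytope: lattice polytope whose only interior lattice point is the
   origin (which forces P to be three-dimensional). *)
Definition fano {R : realType} (P : 'cV[R]_3 -> Prop) : Prop :=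
  lattice_polytope P /\
  forall v : 'cV[int]_3, interior3 P (lat v) <-> v = 0.

Definition lattice_pts {R : realType} (P : 'cV[R]_3 -> Prop) (y : 'cV[R]_3) : Prop :=
  P y /\ exists v : 'cV[int]_3, y = lat v.

Definition minimal_fano {R : realType} (P : 'cV[R]_3 -> Prop) : Prop :=
  fano P /\
  forall rho, is_vertex P rho ->
    ~ fano (conv (fun y => lattice_pts P y /\ y <> rho)).

Definition span2 {R : realType} (u w : 'cV[R]_3) (x : 'cV[R]_3) : Prop :=
  exists a b : R, x = a *: u + b *: w.

(* (u, w) is a Z-basis of N ∩ L, where L = span_R(u, w) is a 2-dim linear
   subspace; i.e. e1 |-> u, e2 |-> w is a lattice isomorphism Z^2 -> N ∩ L. *)
Definition plane_lattice_basis (R : realType) (u w : 'cV[int]_3) : Prop :=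
  (forall a b : R, a *: lat u + b *: lat w = 0 -> a = 0 /\ b = 0) /\
  (forall x : 'cV[int]_3, span2 (lat u) (lat w) (lat x : 'cV[R]_3) ->
     exists m n : int, x = m *: u + n *: w).

Definition GL3Z_equiv {R : realType} (P Q : 'cV[R]_3 -> Prop) : Prop :=
  exists A : 'M[int]_3, A \in unitmx /\
    forall x, P x <-> exists y, Q y /\ x = map_mx (fun z : int => z%:~R) A *m y.

Definition P0_cols : seq 'cV[int]_3 :=
  [:: vec3 1 0 0; vec3 0 1 0; vec3 0 0 1; vec3 (-2) (-1) 0; vec3 (-1) 0 (-1)].

Definition P0 {R : realType} : 'cV[R]_3 -> Prop :=
  conv (fun y => exists2 v, v \in P0_cols & y = lat v).

(** The basic tool is an interior criterion: if a convex set contains m ± u,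
    m ± w and two points strictly on opposite sides of the plane
    m + span(u, w), then it contains a ball around m.  Both triangles are
    balanced around 0: T1 contains ±a/2, ±b/2 and T2, together with the
    midpoint -d of its last two vertices, contains ±d, ±(d+e)/2.  Hence, if v is
    a vertex of P outside T_i, the lattice points of P other than v cannot lie
    strictly on both sides of L_i, for otherwise 0 would stay interior after
    deleting v, contradicting minimality.  Applied to the vertices of T2 and
    T1 in turn, this shows that d is a vertex of T1, that every lattice point
    of P other than e, -2d-e lies in L1, and every lattice point other than
    the two remaining vertices b, -d-b of T1 lies in L2; the lattice points of
    P are then the five vertices, -d and 0.  Lastly det(d, e, b) = ±1, since
    for a larger index K some X d + Y e ± g, with g completing (d, e) to a
    basis, would be a lattice point of P outside L2 other than b and -d-b. *)
From HB Require Import structures.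
From mathcomp Require Import all_boot all_order all_algebra.
From mathcomp Require Import reals boolp.
From mathcomp Require Import ring lra zify.
Import Order.TTheory GRing.Theory Num.Theory.
Local Open Scope ring_scope.
Set Implicit Arguments. Unset Strict Implicit. Unset Printing Implicit Defensive.

Section ConvexHull.
Variable R : realType.
Implicit Types (S C : 'cV[R]_3 -> Prop).

Definition convex C := forall x y (t : R), C x -> C y -> 0 <= t -> t <= 1 ->
  C (t *: x + (1 - t) *: y).

Lemma sub_conv S x : S x -> conv S x.
Proof.
move=> Sx; exists 1%N, (fun _ => x), (fun _ => 1); split=> //; split=> [_|].
  exact: ler01.
by rewrite !big_ord1 scale1r.
Qed.

Lemma conv_mono S S' : (forall x, S x -> S' x) -> forall x, conv S x -> conv S' x.
Proof.
move=> SS' x [n [p [w [Sp [w0 [w1 ->]]]]]]; exists n, p, w; split=> //.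
by move=> i; apply: SS'.
Qed.

Lemma conv_convex S : convex (conv S).
Proof.
move=> x y t [n [p [w [Sp [w0 [w1 ->]]]]]] [m [p' [w' [Sp' [w0' [w1' ->]]]]]] t0 t1.
exists (n + m)%N, (fun k => match split k with inl i => p i | inr j => p' j end),
  (fun k => match split k with inl i => t * w i | inr j => (1 - t) * w' j end).
split; first by move=> k; case: split.
split; first by move=> k; case: split => i; apply: mulr_ge0 => //; rewrite subr_ge0.
rewrite !big_split_ord /=.
have splitl i : split (lshift m i) = inl i.
  by rewrite -[lshift m i]/(unsplit (inl i)) unsplitK.
have splitr j : split (rshift n j) = inr j.
  by rewrite -[rshift n j]/(unsplit (inr j)) unsplitK.
split.
  under eq_bigr do rewrite splitl. under [X in _ + X]eq_bigr do rewrite splitr.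
  by rewrite -!mulr_sumr w1 w1' !mulr1 addrC subrK.
apply/esym; under eq_bigr do rewrite splitl. under [X in _ + X]eq_bigr do rewrite splitr.
by rewrite !scaler_sumr; congr (_ + _); apply: eq_bigr => i _; rewrite scalerA.
Qed.

Lemma conv_sub_convex C S : convex C -> (forall x, S x -> C x) ->
  forall x, conv S x -> C x.
Proof.
move=> Cc SC x [n [p [w [Sp [w0 [w1 ->]]]]]].
elim: n p w Sp w0 w1 => [|n IH] p w Sp w0 w1.
  by move: w1; rewrite big_ord0 => /eqP; rewrite eq_sym oner_eq0.
rewrite big_ord_recr /=; rewrite big_ord_recr /= in w1.
set W := \sum_(i < n) w (widen_ord (leqnSn n) i) in w1 *.
have W0 : 0 <= W by apply: sumr_ge0 => i _.
have [/eqP WE|Wn] := boolP (W == 0).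
  have wz i : w (widen_ord (leqnSn n) i) = 0.
    by move/eqP: WE; rewrite psumr_eq0 // => /allP /(_ i (mem_index_enum _)) /eqP.
  rewrite big1 ?add0r; last by move=> i _; rewrite wz scale0r.
  move: w1; rewrite WE add0r => ->; rewrite scale1r; exact/SC/Sp.
have Wp : 0 < W by rewrite lt_def Wn W0.
have -> : \sum_(i < n) w (widen_ord (leqnSn n) i) *: p (widen_ord (leqnSn n) i) =
   W *: \sum_(i < n) (w (widen_ord (leqnSn n) i) / W) *: p (widen_ord (leqnSn n) i).
  rewrite scaler_sumr; apply: eq_bigr => i _; rewrite scalerA; congr (_ *: _).
  by rewrite mulrCA divff ?mulr1 // gt_eqF.
have -> : w ord_max = 1 - W by rewrite -w1 addrC addrK.
apply: Cc => //; last 2 first.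
- exact/SC/Sp.
- by rewrite -w1 lerDl.
apply: (IH (fun i => p (widen_ord (leqnSn n) i)) (fun i => w (widen_ord (leqnSn n) i) / W)).
- by move=> i; apply: Sp.
- by move=> i; apply: divr_ge0.
- by rewrite -mulr_suml divff // gt_eqF.
Qed.

Lemma convex_comb4 C (x1 x2 x3 x4 : 'cV[R]_3) (t1 t2 t3 t4 : R) : convex C ->
  C x1 -> C x2 -> C x3 -> C x4 -> 0 <= t1 -> 0 <= t2 -> 0 <= t3 -> 0 <= t4 ->
  t1 + t2 + t3 + t4 = 1 -> C (t1 *: x1 + t2 *: x2 + t3 *: x3 + t4 *: x4).
Proof.
move=> Cc C1 C2 C3 C4 t1_ge0 t2_ge0 t3_ge0 t4_ge0 sum1.
apply: (conv_sub_convex Cc (fun _ h => h)).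
exists 4%N, (fun i : 'I_4 => nth x1 [:: x1; x2; x3; x4] i),
  (fun i : 'I_4 => nth t1 [:: t1; t2; t3; t4] i).
split; first by case=> [[|[|[|[|]]]]].
split; first by case=> [[|[|[|[|]]]]].
by rewrite !big_ord_recr !big_ord0 /= !add0r.
Qed.

Lemma convex_comb3 C (x1 x2 x3 : 'cV[R]_3) (t1 t2 t3 : R) : convex C ->
  C x1 -> C x2 -> C x3 -> 0 <= t1 -> 0 <= t2 -> 0 <= t3 ->
  t1 + t2 + t3 = 1 -> C (t1 *: x1 + t2 *: x2 + t3 *: x3).
Proof.
move=> Cc C1 C2 C3 t1_ge0 t2_ge0 t3_ge0.
have := convex_comb4 Cc C1 C2 C3 C1 t1_ge0 t2_ge0 t3_ge0 (lexx 0).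
by rewrite addr0 scale0r addr0; apply.
Qed.

Lemma convex_comb2 C (x1 x2 : 'cV[R]_3) (t1 t2 : R) : convex C ->
  C x1 -> C x2 -> 0 <= t1 -> 0 <= t2 -> t1 + t2 = 1 -> C (t1 *: x1 + t2 *: x2).
Proof.
move=> Cc C1 C2 t1_ge0 t2_ge0.
have := convex_comb3 Cc C1 C2 C1 t1_ge0 t2_ge0 (lexx 0).
by rewrite addr0 scale0r addr0; apply.
Qed.

Lemma convex_mid C (x y : 'cV[R]_3) : convex C -> C x -> C y ->
  C (2^-1 *: x + 2^-1 *: y).
Proof.
move=> Cc Cx Cy; apply: convex_comb2 => //; try by rewrite invr_ge0 ler0n.
by field.
Qed.

End ConvexHull.

Definition i1 : 'I_3 := @Ordinal 3 1 isT.
Definition i2 : 'I_3 := @Ordinal 3 2 isT.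

Lemma ord3_cases (i : 'I_3) : [\/ i = ord0, i = i1 | i = i2].
Proof.
case: i => [[|[|[|//]]]] Hi; [constructor 1|constructor 2|constructor 3];
  exact: val_inj.
Qed.

Lemma col3P (T : Type) (x y : 'cV[T]_3) :
  x ord0 ord0 = y ord0 ord0 -> x i1 ord0 = y i1 ord0 -> x i2 ord0 = y i2 ord0 -> x = y.
Proof.
move=> h0 h1 h2; apply/matrixP => i j; rewrite (ord1 j).
by case: (ord3_cases i) => ->.
Qed.

Ltac col3_ring := apply: col3P; rewrite ?mxE /=; ring.
Ltac col3_field := apply: col3P; rewrite ?mxE /=; field.

Definition det3 (T : comPzRingType) (x y z : 'cV[T]_3) : T :=
  x ord0 ord0 * (y i1 ord0 * z i2 ord0 - y i2 ord0 * z i1 ord0)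
  - x i1 ord0 * (y ord0 ord0 * z i2 ord0 - y i2 ord0 * z ord0 ord0)
  + x i2 ord0 * (y ord0 ord0 * z i1 ord0 - y i1 ord0 * z ord0 ord0).

Lemma det3_cramer (T : comPzRingType) (a b c x : 'cV[T]_3) :
  det3 a b c *: x = det3 x b c *: a + det3 a x c *: b + det3 a b x *: c.
Proof. rewrite /det3; col3_ring. Qed.

Lemma det3C12 (T : comPzRingType) (a b c : 'cV[T]_3) : det3 a b c = - det3 b a c.
Proof. rewrite /det3; ring. Qed.

Lemma det3_cycle (T : comPzRingType) (a b c : 'cV[T]_3) : det3 a b c = det3 c a b.
Proof. rewrite /det3; ring. Qed.

Section LatticeEmbedding.
Variable R : realType.

Lemma latE (v : 'cV[int]_3) i j : (lat v : 'cV[R]_3) i j = (v i j)%:~R.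
Proof. by rewrite /lat mxE. Qed.

Lemma latD (u v : 'cV[int]_3) : (lat (u + v) : 'cV[R]_3) = lat u + lat v.
Proof. by apply/matrixP => i j; rewrite !mxE intrD. Qed.

Lemma latN (u : 'cV[int]_3) : (lat (- u) : 'cV[R]_3) = - lat u.
Proof. by apply/matrixP => i j; rewrite !mxE intrN. Qed.

Lemma latB (u v : 'cV[int]_3) : (lat (u - v) : 'cV[R]_3) = lat u - lat v.
Proof. by rewrite latD latN. Qed.

Lemma latZ (k : int) (u : 'cV[int]_3) : (lat (k *: u) : 'cV[R]_3) = k%:~R *: lat u.
Proof. by apply/matrixP => i j; rewrite !mxE intrM. Qed.

Lemma lat0 : (lat 0 : 'cV[R]_3) = 0.
Proof. by apply/matrixP => i j; rewrite !mxE. Qed.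

Lemma lat_inj : injective (lat : 'cV[int]_3 -> 'cV[R]_3).
Proof.
move=> u v /matrixP h; apply/matrixP => i j; move: (h i j); rewrite !mxE.
exact: intr_inj.
Qed.

Lemma det3_lat (x y z : 'cV[int]_3) :
  det3 (lat x : 'cV[R]_3) (lat y) (lat z) = (det3 x y z)%:~R.
Proof. rewrite /det3 !latE !(intrD, intrB, intrM, intrN); ring. Qed.

End LatticeEmbedding.

Section InteriorCriterion.
Variable R : realType.
Implicit Types (C : 'cV[R]_3 -> Prop).

Definition minor_norm (b c : 'cV[R]_3) : R :=
  `|b i1 ord0 * c i2 ord0 - b i2 ord0 * c i1 ord0|
  + `|b ord0 ord0 * c i2 ord0 - b i2 ord0 * c ord0 ord0|
  + `|b ord0 ord0 * c i1 ord0 - b i1 ord0 * c ord0 ord0|.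

Lemma minor_norm_ge0 b c : 0 <= minor_norm b c.
Proof. by rewrite /minor_norm !addr_ge0. Qed.

Lemma det3_le_minor_norm (x b c : 'cV[R]_3) (r : R) : (forall i, `|x i ord0| <= r) ->
  `|det3 x b c| <= r * minor_norm b c.
Proof.
move=> hx; rewrite /det3 /minor_norm.
have coordM (i : 'I_3) (z : R) : `|x i ord0 * z| <= r * `|z|.
  by rewrite normrM ler_wpM2r.
rewrite [r * _]mulrDr [r * (_ + _)]mulrDr.
apply: (le_trans (ler_normD _ _)); apply: lerD; last exact: coordM.
apply: (le_trans (ler_normD _ _)); apply: lerD; first exact: coordM.
by rewrite normrN; apply: coordM.
Qed.

Lemma cramer_nums_le (u w p d : 'cV[R]_3) (r : R) : (forall i, `|d i ord0| <= r) ->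
  `|det3 d w p| + `|det3 u d p| + `|det3 u w d| <=
    r * (minor_norm w p + minor_norm u p + minor_norm u w).
Proof.
move=> hd; rewrite (det3C12 u d p) normrN (det3_cycle u w d).
by rewrite [r * _]mulrDr [r * (_ + _)]mulrDr; apply: lerD; [apply: lerD|];
  apply: det3_le_minor_norm.
Qed.

Lemma det3_coords (a b c x : 'cV[R]_3) : det3 a b c != 0 ->
  x = (det3 x b c / det3 a b c) *: a + (det3 a x c / det3 a b c) *: b
      + (det3 a b x / det3 a b c) *: c.
Proof.
move=> D0; apply: (scalerI D0); rewrite det3_cramer !scalerDr !scalerA.
by congr (_ *: _ + _ *: _ + _ *: _); rewrite mulrCA divff // mulr1.
Qed.

Lemma convex_signed_pt C (m u : 'cV[R]_3) (t : R) : C (m + u) -> C (m - u) ->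
  exists2 y, C y & `|t| *: y = `|t| *: m + t *: u.
Proof.
move=> Cmu Cmu'; have [t0|t0] := leP 0 t.
  by exists (m + u) => //; rewrite ger0_norm // scalerDr.
by exists (m - u) => //; rewrite ltr0_norm //; col3_ring.
Qed.

(* Writing d = al u + be w + ga p (Cramer), the point m + d is the convex
   combination |al| (m ± u) + |be| (m ± w) + ga (m + p) + (1 - ...) m. *)
Lemma frame_half_mem C (m u w p d : 'cV[R]_3) :
  convex C -> C (m + u) -> C (m - u) -> C (m + w) -> C (m - w) -> C (m + p) ->
  det3 u w p != 0 -> 0 <= det3 u w d / det3 u w p ->
  `|det3 d w p| + `|det3 u d p| + `|det3 u w d| <= `|det3 u w p| ->
  C (m + d).
Proof.
move=> Cc Cmu Cmu' Cmw Cmw' Cmp D0 ga_ge0 hsum.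
set D := det3 u w p in D0 ga_ge0 hsum.
set al := det3 d w p / D; set be := det3 u d p / D; set ga := det3 u w d / D.
have Ed : d = al *: u + be *: w + ga *: p by exact: det3_coords.
have [y1 Cy1 Ey1] := convex_signed_pt al Cmu Cmu'.
have [y2 Cy2 Ey2] := convex_signed_pt be Cmw Cmw'.
have Dn : 0 < `|D| by rewrite normr_gt0.
have hs : `|al| + `|be| + ga <= 1.
  rewrite -[ga]ger0_norm // /al /be /ga !normrM !normfV -!mulrDl.
  by rewrite ler_pdivrMr // mul1r.
have rest_ge0 : 0 <= 1 - `|al| - `|be| - ga by lra.
have Cm : C m.
  have -> : m = 2^-1 *: (m + u) + 2^-1 *: (m - u) by col3_field.
  exact: convex_mid.
have := convex_comb4 Cc Cy1 Cy2 Cmp Cm (normr_ge0 al) (normr_ge0 be) ga_ge0 rest_ge0.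
rewrite Ey1 Ey2.
have -> : `|al| + `|be| + ga + (1 - `|al| - `|be| - ga) = 1 by ring.
move=> /(_ erefl).
suff -> : `|al| *: m + al *: u + (`|be| *: m + be *: w) + ga *: (m + p) +
          (1 - `|al| - `|be| - ga) *: m = m + d by [].
by rewrite Ed; col3_ring.
Qed.

Lemma frame_interior C (m u w p q : 'cV[R]_3) :
  convex C -> C (m + u) -> C (m - u) -> C (m + w) -> C (m - w) ->
  C (m + p) -> C (m + q) ->
  0 < det3 u w p -> det3 u w q < 0 -> interior3 C m.
Proof.
move=> Cc Cmu Cmu' Cmw Cmw' Cmp Cmq Dp Dq.
have Kp0 : 0 <= minor_norm w p + minor_norm u p + minor_norm u w.
  by rewrite !addr_ge0 // minor_norm_ge0.
have Kq0 : 0 <= minor_norm w q + minor_norm u q + minor_norm u w.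
  by rewrite !addr_ge0 // minor_norm_ge0.
set Kp := minor_norm w p + _ + _ in Kp0 *.
set Kq := minor_norm w q + _ + _ in Kq0 *.
exists (Order.min (det3 u w p / (Kp + 1)) (- det3 u w q / (Kq + 1))).
split; first by rewrite lt_min; apply/andP; split; apply: divr_gt0 => //; lra.
set r := Order.min _ _ => y hy.
have r_le_p : r <= det3 u w p / (Kp + 1) by rewrite ge_min lexx.
have r_le_q : r <= - det3 u w q / (Kq + 1) by rewrite ge_min lexx orbT.
have r_ge0 : 0 <= r by apply: le_trans (normr_ge0 _) (ltW (hy ord0)).
have hd : forall i, `|(y - m) i ord0| <= r by move=> i; rewrite !mxE; move: (hy i) => /ltW.
have -> : y = m + (y - m) by rewrite addrC subrK.
set d := y - m in hd *.
have [g|g] := leP 0 (det3 u w d).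
  apply: (frame_half_mem Cc Cmu Cmu' Cmw Cmw' Cmp); first by rewrite gt_eqF.
    by apply: divr_ge0 => //; apply: ltW.
  apply: le_trans (cramer_nums_le u w p hd) _.
  rewrite ler_pdivlMr in r_le_p; last lra.
  by rewrite gtr0_norm //; rewrite mulrDr mulr1 in r_le_p; rewrite -/Kp; lra.
apply: (frame_half_mem Cc Cmu Cmu' Cmw Cmw' Cmq); first by rewrite lt_eqF.
  rewrite -mulrNN -invrN; apply: divr_ge0; rewrite oppr_ge0; exact: ltW.
apply: le_trans (cramer_nums_le u w q hd) _.
rewrite ler_pdivlMr in r_le_q; last lra.
by rewrite ltr0_norm //; rewrite mulrDr mulr1 in r_le_q; rewrite -/Kq; lra.
Qed.

End InteriorCriterion.

Definition int_range (N : nat) : seq int := [seq (i%:Z - N%:Z) | i <- iota 0 (2 * N).+1].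

Definition int_box (N : nat) : seq 'cV[int]_3 :=
  flatten [seq flatten [seq [seq vec3 a b c | c <- int_range N] | b <- int_range N]
          | a <- int_range N].

Lemma mem_int_range N (z : int) : `|z| <= N%:Z -> z \in int_range N.
Proof.
move=> hz; apply/mapP; exists (absz (z + N%:Z)); first by rewrite mem_iota; lia.
by rewrite -[LHS](addrK N%:Z); congr (_ - _); rewrite gez0_abs //; lia.
Qed.

Lemma vec3E (v : 'cV[int]_3) : v = vec3 (v ord0 ord0) (v i1 ord0) (v i2 ord0).
Proof. by apply: col3P; rewrite !mxE. Qed.

Lemma mem_int_box N (v : 'cV[int]_3) : (forall i, `|v i ord0| <= N%:Z) -> v \in int_box N.
Proof.
move=> hv; rewrite (vec3E v); apply/flatten_mapP; exists (v ord0 ord0).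
  exact: mem_int_range.
apply/flatten_mapP; exists (v i1 ord0); first exact: mem_int_range.
by apply: map_f; exact: mem_int_range.
Qed.

Section LatticePolytope.
Variable R : realType.
Implicit Types (P Q C : 'cV[R]_3 -> Prop).

Lemma lattice_polytope_convex P : lattice_polytope P -> convex P.
Proof.
move=> [s hs] x y t Px Py t0 t1; apply/hs; apply: conv_convex => //; exact/hs.
Qed.

Lemma lattice_polytope_bounded P : lattice_polytope P -> exists N : nat,
  forall v : 'cV[int]_3, P (lat v) -> forall i, `|v i ord0| <= N%:Z.
Proof.
move=> [s hs].
exists (\sum_(v <- s) (`|v ord0 ord0| + `|v i1 ord0| + `|v i2 ord0|)%N)%N.
set N := (\sum_(v <- s) _)%N.
have coord_le v i : v \in s -> (`|v i ord0| <= N)%N.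
  move=> vs; rewrite /N (big_rem _ vs) /=; apply: leq_trans (leq_addr _ _).
  by case: (ord3_cases i) => ->; lia.
have box_convex : convex (fun x : 'cV[R]_3 => forall i, `|x i ord0| <= (N%:Z)%:~R).
  move=> x y t hx hy t0 t1 i; rewrite !mxE.
  apply: le_trans (ler_normD _ _) _; rewrite !normrM (ger0_norm t0).
  rewrite (ger0_norm (_ : 0 <= 1 - t)); last by rewrite subr_ge0.
  have := hx i; have := hy i; have : 0 <= 1 - t by rewrite subr_ge0.
  move: (`|x i ord0|) (`|y i ord0|) => a b ht hb ha; nra.
move=> v /hs /(conv_sub_convex box_convex) bound i.
suff : `|(lat v : 'cV[R]_3) i ord0| <= (N%:Z)%:~R by rewrite latE -intr_norm ler_int.
apply: bound => y [w ws ->] j.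
by rewrite latE -intr_norm ler_int -abszE lez_nat; exact: coord_le.
Qed.

Lemma lattice_polytope_conv_pts P Q : lattice_polytope P ->
  (forall y, Q y -> lattice_pts P y) -> lattice_polytope (conv Q).
Proof.
move=> hP hQ; have [N hN] := lattice_polytope_bounded hP.
exists [seq v <- int_box N | `[< Q (lat v) >]] => x; split; apply: conv_mono.
  move=> y Qy; have [Py [v ev]] := hQ y Qy; exists v => //.
  rewrite mem_filter; apply/andP; split; first by apply/asboolP; rewrite -ev.
  by apply: mem_int_box; apply: hN; rewrite -ev.
by move=> y [v]; rewrite mem_filter => /andP [/asboolP h _] ->.
Qed.

Lemma interior3_mono C C' (x : 'cV[R]_3) : (forall y, C y -> C' y) ->
  interior3 C x -> interior3 C' x.
Proof. by move=> CC' [r [r0 hr]]; exists r; split=> // y /hr /CC'. Qed.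

Lemma fano_conv_pts P Q : fano P -> (forall y, Q y -> lattice_pts P y) ->
  interior3 (conv Q) 0 -> fano (conv Q).
Proof.
move=> [hP hF] hQ h0; split; first exact: lattice_polytope_conv_pts hQ.
move=> v; split; last by move=> ->; rewrite lat0.
move=> hv; apply/hF; apply: interior3_mono hv.
by apply: conv_sub_convex (lattice_polytope_convex hP) _ => y /hQ [].
Qed.

Definition pts_but P (rho : 'cV[R]_3) (y : 'cV[R]_3) := lattice_pts P y /\ y <> rho.

Lemma minimal_fano_no_frame P rho (u w p q : 'cV[R]_3) :
  minimal_fano P -> is_vertex P rho ->
  conv (pts_but P rho) u -> conv (pts_but P rho) (- u) ->
  conv (pts_but P rho) w -> conv (pts_but P rho) (- w) ->
  conv (pts_but P rho) p -> conv (pts_but P rho) q ->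
  0 < det3 u w p -> det3 u w q < 0 -> False.
Proof.
move=> [hF hmin] hv Cu Cu' Cw Cw' Cp Cq Dp Dq; apply: (hmin rho hv).
apply: (fano_conv_pts hF); first by move=> y [].
apply: (frame_interior (u:=u) (w:=w) (p:=p) (q:=q)) => //; try by rewrite add0r.
exact: conv_convex.
Qed.

End LatticePolytope.

Definition crossv (T : comPzRingType) (x y : 'cV[T]_3) : 'cV[T]_3 :=
  \col_(i < 3) nth 0 [:: x i1 ord0 * y i2 ord0 - x i2 ord0 * y i1 ord0;
                        x i2 ord0 * y ord0 ord0 - x ord0 ord0 * y i2 ord0;
                        x ord0 ord0 * y i1 ord0 - x i1 ord0 * y ord0 ord0] i.

Definition indep (R : realType) (x y : 'cV[R]_3) :=
  forall s t : R, s *: x + t *: y = 0 -> s = 0 /\ t = 0.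

Section PlaneBasis.
Variable R : realType.

Lemma det3_crossv (x y : 'cV[R]_3) : det3 x y (crossv x y) =
  crossv x y ord0 ord0 ^+ 2 + crossv x y i1 ord0 ^+ 2 + crossv x y i2 ord0 ^+ 2.
Proof. by rewrite /det3 !mxE /=; ring. Qed.

Lemma indep_crossv_neq0 (x y : 'cV[R]_3) : indep x y -> crossv x y != 0.
Proof.
move=> hxy; apply/eqP => /matrixP c0.
have c_eq0 i : crossv x y i ord0 = 0 by rewrite c0 mxE.
move: (c_eq0 ord0) (c_eq0 i1) (c_eq0 i2); rewrite !mxE /= => /eqP h0 /eqP h1 /eqP h2.
move: h0 h1 h2; rewrite !subr_eq0 => /eqP h0 /eqP h1 /eqP h2.
have nz_coord (k : 'I_3) : x k ord0 != 0 -> False.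
  move=> xk; have E : y k ord0 *: x + (- x k ord0) *: y = 0.
    by apply: col3P; rewrite !mxE; case: (ord3_cases k) => -> /=; lra.
  by have [_ /eqP] := hxy _ _ E; rewrite oppr_eq0 (negbTE xk).
have x_eq0 k : x k ord0 = 0 by have [//|/nz_coord []] := eqVneq (x k ord0) 0.
have E : 1 *: x + 0 *: y = 0 by apply: col3P; rewrite !mxE !x_eq0; ring.
by have [/eqP] := hxy _ _ E; rewrite oner_eq0.
Qed.

Lemma indep_det3_crossv_gt0 (x y : 'cV[R]_3) : indep x y -> 0 < det3 x y (crossv x y).
Proof.
move=> /indep_crossv_neq0 c_neq0; rewrite det3_crossv.
have sq_gt0 (k : 'I_3) : crossv x y k ord0 != 0 -> 0 < crossv x y k ord0 ^+ 2.
  by move=> ck; rewrite exprn_even_gt0.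
have := sqr_ge0 (crossv x y ord0 ord0); have := sqr_ge0 (crossv x y i1 ord0).
have := sqr_ge0 (crossv x y i2 ord0).
have [k ck] : exists k, crossv x y k ord0 != 0.
  apply/existsP; move: c_neq0; apply: contraNT => /existsPn c0.
  by apply/eqP/matrixP => i j; rewrite (ord1 j) [RHS]mxE; apply/eqP/negPn/c0.
by move: (sq_gt0 k ck); case: (ord3_cases k) => ->; lra.
Qed.

Lemma indep_det3_eq0_span2 (x y z : 'cV[R]_3) : indep x y -> det3 x y z = 0 ->
  span2 x y z.
Proof.
move=> hxy hz; have D0 := gt_eqF (indep_det3_crossv_gt0 hxy).
have := det3_coords z (negbT D0); rewrite hz mul0r scale0r addr0 => ->.
by eexists; eexists.
Qed.

Lemma plane_basis_indep (d e : 'cV[int]_3) : plane_lattice_basis R d e ->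
  indep (lat d : 'cV[R]_3) (lat e).
Proof. by case. Qed.

Lemma plane_basis_coords (d e x : 'cV[int]_3) : plane_lattice_basis R d e ->
  det3 d e x = 0 -> exists m n : int, x = m *: d + n *: e.
Proof.
move=> [hi hl] h; apply: hl; apply: indep_det3_eq0_span2 => //.
by rewrite det3_lat h.
Qed.

Lemma plane_basis_int_indep (d e : 'cV[int]_3) (s t : int) :
  plane_lattice_basis R d e -> s *: d + t *: e = 0 -> s = 0 /\ t = 0.
Proof.
move=> [hi _] h; have [] := hi s%:~R t%:~R; first by rewrite -!latZ -latD h lat0.
by move/eqP; rewrite intr_eq0 => /eqP -> /eqP; rewrite intr_eq0 => /eqP ->.
Qed.

Lemma plane_basis_rot (a b : 'cV[int]_3) : plane_lattice_basis R a b ->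
  plane_lattice_basis R b (- a - b).
Proof.
move=> [hi hl]; split.
  move=> s t; rewrite latB latN => h.
  have E : (- t) *: (lat a : 'cV[R]_3) + (s - t) *: lat b = 0 by rewrite -h; col3_ring.
  by have [] := hi _ _ E; lra.
move=> x [s [t hx]].
have hs : span2 (lat a : 'cV[R]_3) (lat b) (lat x).
  by exists (- t), (s - t); rewrite hx latB latN; col3_ring.
have [m [n ->]] := hl x hs.
by exists (n - m), (- m); col3_ring.
Qed.

(* Bezout for the three 2x2 minors gives g with det(d, e, g) = gcd of the
   minors; expressing the standard basis in terms of d, e, g shows gcd = 1. *)
Lemma plane_basis_complete (d e : 'cV[int]_3) : plane_lattice_basis R d e ->
  exists g, det3 d e g = 1.
Proof.
move=> hde.
set n0 := d i1 ord0 * e i2 ord0 - d i2 ord0 * e i1 ord0.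
set n1 := d i2 ord0 * e ord0 ord0 - d ord0 ord0 * e i2 ord0.
set n2 := d ord0 ord0 * e i1 ord0 - d i1 ord0 * e ord0 ord0.
case: (Bezoutz n0 n1) => u0 [v0 h01].
case: (Bezoutz (gcdz n0 n1) n2) => u1 [v1 h2].
set g0 := gcdz (gcdz n0 n1) n2 in h2.
set x0 := vec3 (u1 * u0) (u1 * v0) v1.
have hx0 : det3 d e x0 = g0 by rewrite -h2 -h01 /det3 /x0 !mxE /= /n0 /n1 /n2; ring.
have coords_x0 (v : 'cV[int]_3) (ni : int) : det3 d e v = ni -> (g0 %| ni)%Z ->
    exists m k : int, v = m *: d + k *: e + (ni %/ g0)%Z *: x0.
  move=> hv hdv.
  have hz : det3 d e (v - (ni %/ g0)%Z *: x0) = 0.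
    have -> : det3 d e (v - (ni %/ g0)%Z *: x0) = det3 d e v - (ni %/ g0)%Z * det3 d e x0.
      by rewrite /det3 !mxE; ring.
    by rewrite hv hx0 divzK // subrr.
  have [m [k hmk]] := plane_basis_coords hde hz.
  by exists m, k; rewrite -hmk subrK.
have [m0 [k0 E0]] : exists m k : int,
    vec3 1 0 0 = m *: d + k *: e + (n0 %/ g0)%Z *: x0.
  apply: coords_x0; first by rewrite /det3 !mxE /= /n0; ring.
  exact: dvdz_trans (dvdz_gcdl _ _) (dvdz_gcdl _ _).
have [m1 [k1 E1]] : exists m k : int,
    vec3 0 1 0 = m *: d + k *: e + (n1 %/ g0)%Z *: x0.
  apply: coords_x0; first by rewrite /det3 !mxE /= /n1; ring.
  exact: dvdz_trans (dvdz_gcdl _ _) (dvdz_gcdr _ _).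
have [m2 [k2 E2]] : exists m k : int,
    vec3 0 0 1 = m *: d + k *: e + (n2 %/ g0)%Z *: x0.
  by apply: coords_x0; [rewrite /det3 !mxE /= /n2; ring | apply: dvdz_gcdr].
have h : det3 (vec3 1 0 0) (vec3 0 1 0) (vec3 0 0 1) = 1 by rewrite /det3 !mxE /=; ring.
rewrite [LHS](_ : det3 (vec3 1 0 0) (vec3 0 1 0) (vec3 0 0 1) = g0 *
    (m0 * (k1 * (n2 %/ g0)%Z - (n1 %/ g0)%Z * k2) - k0 * (m1 * (n2 %/ g0)%Z -
     (n1 %/ g0)%Z * m2) + (n0 %/ g0)%Z * (m1 * k2 - k1 * m2))) in h; last first.
  by rewrite E0 E1 E2 -hx0 /det3 !mxE; ring.
have g0_ge0 : 0 <= g0 by rewrite /g0 /gcdz.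
have [D {}h] : exists D : int, g0 * D = 1 by eexists; exact: h.
exists x0; rewrite hx0; clearbody g0; clear -g0_ge0 h.
have [D_le0|D_ge1] : D <= 0 \/ 1 <= D by lia.
all: nia.
Qed.

Lemma distinct_planes_det3 (a b d e : 'cV[int]_3) : plane_lattice_basis R a b ->
  plane_lattice_basis R d e ->
  ~ (forall x : 'cV[R]_3, span2 (lat a) (lat b) x <-> span2 (lat d) (lat e) x) ->
  ~ (det3 a b d = 0 /\ det3 a b e = 0).
Proof.
move=> hab hde neq [hd he]; apply: neq => x; split; last first.
  move=> [s [t ->]]; apply: indep_det3_eq0_span2; first exact: plane_basis_indep.
  have -> : det3 (lat a) (lat b) (s *: lat d + t *: lat e) =
      s * det3 (lat a) (lat b) (lat d) + t * det3 (lat a : 'cV[R]_3) (lat b) (lat e).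
    by rewrite /det3 !mxE; ring.
  by rewrite !det3_lat hd he !mulr0 addr0.
have in_ab (v : 'cV[int]_3) : det3 a b v = 0 -> span2 (lat a : 'cV[R]_3) (lat b) (lat v).
  by move=> hv; apply: indep_det3_eq0_span2; [exact: plane_basis_indep|rewrite det3_lat hv].
move=> [s [t ->]]; apply: indep_det3_eq0_span2; first exact: plane_basis_indep.
have [s1 [t1 ->]] := in_ab _ hd; have [s2 [t2 ->]] := in_ab _ he.
by rewrite /det3 !mxE; ring.
Qed.

End PlaneBasis.

Lemma lat_T2 (R : realType) (d e : 'cV[int]_3) :
  (lat (- (2%:R *: d) - e) : 'cV[R]_3) = - (2 *: lat d) - lat e.
Proof. col3_ring. Qed.

Section BalancedTriangles.
Variable R : realType.
Variable P : 'cV[R]_3 -> Prop.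
Hypothesis hm : minimal_fano P.

Lemma minimal_fano_convex : convex P.
Proof. exact: lattice_polytope_convex hm.1.1. Qed.

Lemma T1_centroid (a b : 'cV[int]_3) :
  P (lat a) -> P (lat b) -> P (lat (- a - b)) -> P 0.
Proof.
move=> Pa Pb Pc.
have -> : (0 : 'cV[R]_3) = 3^-1 *: lat a + 3^-1 *: lat b + 3^-1 *: lat (- a - b).
  by rewrite latB latN; col3_field.
by apply: (convex_comb3 minimal_fano_convex Pa Pb Pc); rewrite ?invr_ge0 ?ler0n //; field.
Qed.

Lemma T2_midpoint (d e : 'cV[int]_3) :
  P (lat e) -> P (lat (- (2%:R *: d) - e)) -> P (lat (- d)).
Proof.
move=> Pe Pf.
have -> : (lat (- d) : 'cV[R]_3) = 2^-1 *: lat e + 2^-1 *: lat (- (2%:R *: d) - e).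
  by rewrite lat_T2 latN; col3_field.
exact: convex_mid minimal_fano_convex Pe Pf.
Qed.

Lemma conv_pts_but (v x : 'cV[int]_3) : P (lat x) -> x <> v ->
  conv (pts_but P (lat v)) (lat x).
Proof. by move=> Px xv; apply: sub_conv; split; [split=> //; exists x|move/lat_inj]. Qed.

Lemma T1_no_split (a b v x y : 'cV[int]_3) :
  P (lat a) -> P (lat b) -> P (lat (- a - b)) -> is_vertex P (lat v) ->
  a <> v -> b <> v -> - a - b <> v -> P (lat x) -> P (lat y) -> x <> v -> y <> v ->
  0 < det3 a b x -> det3 a b y < 0 -> False.
Proof.
move=> Pa Pb Pc hv av bv cv Px Py xv yv Dx Dy.
have Ca := conv_pts_but Pa av; have Cb := conv_pts_but Pb bv.
have Cc := conv_pts_but Pc cv.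
have Cv := @conv_convex R (pts_but P (lat v)).
have h6 : (0 : R) <= 6^-1 by rewrite invr_ge0 ler0n.
have h2 : (0 : R) <= 2^-1 by rewrite invr_ge0 ler0n.
have h23 : (0 : R) <= 2 / 3 by rewrite divr_ge0 ?ler0n.
have quarter z : det3 (2^-1 *: lat a) (2^-1 *: lat b) (lat z) = 4^-1 * (det3 a b z)%:~R :> R.
  by rewrite -det3_lat /det3 !mxE; field.
apply: (minimal_fano_no_frame (u := 2^-1 *: lat a) (w := 2^-1 *: lat b)
  (p := lat x) (q := lat y) hm hv).
- have -> : 2^-1 *: lat a = (2/3) *: lat a + 6^-1 *: lat b + 6^-1 *: (lat (- a - b) : 'cV[R]_3).
    by rewrite latB latN; col3_field.
  by apply: convex_comb3 => //; field.
- have -> : - (2^-1 *: lat a) = 2^-1 *: lat b + 2^-1 *: (lat (- a - b) : 'cV[R]_3).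
    by rewrite latB latN; col3_field.
  exact: convex_mid.
- have -> : 2^-1 *: lat b = 6^-1 *: lat a + (2/3) *: lat b + 6^-1 *: (lat (- a - b) : 'cV[R]_3).
    by rewrite latB latN; col3_field.
  by apply: convex_comb3 => //; field.
- have -> : - (2^-1 *: lat b) = 2^-1 *: lat a + 2^-1 *: (lat (- a - b) : 'cV[R]_3).
    by rewrite latB latN; col3_field.
  exact: convex_mid.
- exact: conv_pts_but.
- exact: conv_pts_but.
- by rewrite quarter mulr_gt0 ?invr_gt0 ?ltr0n // ltr0z.
- by rewrite quarter pmulr_rlt0 ?invr_gt0 ?ltr0n // ltrz0.
Qed.

Lemma T2_no_split (d e v x y : 'cV[int]_3) :
  P (lat d) -> P (lat e) -> P (lat (- (2%:R *: d) - e)) -> is_vertex P (lat v) ->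
  d <> v -> - d <> v -> e <> v -> - (2%:R *: d) - e <> v ->
  P (lat x) -> P (lat y) -> x <> v -> y <> v ->
  0 < det3 d e x -> det3 d e y < 0 -> False.
Proof.
move=> Pd Pe Pf hv dv dv' ev fv Px Py xv yv Dx Dy.
have Cd := conv_pts_but Pd dv; have Cd' := conv_pts_but (T2_midpoint Pe Pf) dv'.
have Ce := conv_pts_but Pe ev; have Cf := conv_pts_but Pf fv.
have Cv := @conv_convex R (pts_but P (lat v)).
have half z : det3 (lat d) (2^-1 *: lat d + 2^-1 *: lat e) (lat z) =
    2^-1 * (det3 d e z)%:~R :> R.
  by rewrite -det3_lat /det3 !mxE; field.
apply: (minimal_fano_no_frame (u := lat d) (w := 2^-1 *: lat d + 2^-1 *: lat e)
   (p := lat x) (q := lat y) hm hv) => //.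
- by rewrite -latN.
- exact: convex_mid.
- have -> : - (2^-1 *: lat d + 2^-1 *: lat e) =
     2^-1 *: lat d + 2^-1 *: (lat (- (2%:R *: d) - e) : 'cV[R]_3).
    by rewrite lat_T2; col3_field.
  exact: convex_mid.
- exact: conv_pts_but.
- exact: conv_pts_but.
- by rewrite half mulr_gt0 ?invr_gt0 ?ltr0n // ltr0z.
- by rewrite half pmulr_rlt0 ?invr_gt0 ?ltr0n // ltrz0.
Qed.

End BalancedTriangles.

(* (u, v) lies in (K - 1) conv{(1,0), (0,1), (-2,-1)}, the three inequalities
   being those of the edges of this triangle. *)
Definition in_scaled_T2 (K u v : int) :=
  [/\ u + v <= K - 1, v - u <= K - 1 & u - 3 * v <= K - 1].

Lemma scaled_T2_residue (K a b : int) : 0 <= a < K -> 0 <= b < K ->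
  (2 * a = K /\ 2 * b = K) \/ exists i j : int, in_scaled_T2 K (a + i * K) (b + j * K).
Proof.
move=> /andP [a0 aK] /andP [b0 bK].
have [h|h] : a + b <= K - 1 \/ K <= a + b by lia.
  by right; exists 0, 0; split; lia.
have [h2|h2] : b < a \/ a <= b by lia.
  by right; exists (-1), 0; split; lia.
have [h3|h3] : a + K + 1 <= 3 * b \/ 3 * b <= a + K by lia.
  by right; exists (-1), (-1); split; lia.
by left; lia.
Qed.

Lemma scaled_T2_cover (K p q : int) : 2 <= K ->
  (exists X Y, in_scaled_T2 K (K * X - p) (K * Y - q)) \/
  (exists X Y, in_scaled_T2 K (K * X + 1 + p) (K * Y + q)).
Proof.
move=> K2; have K0 : K != 0 by lia.
have Kp : 0 < K by lia.
have mod_range z : 0 <= (z %% K)%Z < K by rewrite modz_ge0 // ltz_pmod.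
have [[ha hb]|[i [j hij]]] := scaled_T2_residue (mod_range (- p)) (mod_range (- q)).
  have [[hc hd]|[i [j hij]]] := scaled_T2_residue (mod_range (1 + p)) (mod_range q).
    have := divz_eq (- p) K; have := divz_eq (1 + p) K.
    move: (_ %/ _)%Z (_ %/ _)%Z => t1 t2 e1 e2; exfalso.
    have : 1 = (t1 + t2 + 1) * K by lia.
    by nia.
  right; exists (- ((1 + p) %/ K)%Z + i), (- (q %/ K)%Z + j).
  by have := divz_eq (1 + p) K; have := divz_eq q K; case: hij; split; lia.
left; exists (- ((- p) %/ K)%Z + i), (- ((- q) %/ K)%Z + j).
by have := divz_eq (- p) K; have := divz_eq (- q) K; case: hij; split; lia.
Qed.

Lemma conv_scaled_T2 (R : realType) (C : 'cV[R]_3 -> Prop) (z D E : 'cV[R]_3)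
    (K u v : R) :
  convex C -> C z -> C D -> C E -> C (- (2 *: D) - E) -> 1 <= K ->
  u + v <= K - 1 -> v - u <= K - 1 -> u - 3 * v <= K - 1 ->
  C (K^-1 *: (z + u *: D + v *: E)).
Proof.
move=> Cc Cz CD CE CF K1 h1 h2 h3.
have K0 : 0 < K by lra.
have K_neq0 : K != 0 by rewrite gt_eqF.
have := convex_comb4 Cc Cz CD CE CF (t1 := K^-1) (t2 := (K - 1 + u - v) / (2 * K))
  (t3 := (K - 1 - u + 3 * v) / (4 * K)) (t4 := (K - 1 - u - v) / (4 * K)).
have -> : K^-1 *: z + (K - 1 + u - v) / (2 * K) *: D + (K - 1 - u + 3 * v) / (4 * K) *: E +
   (K - 1 - u - v) / (4 * K) *: (- (2 *: D) - E) = K^-1 *: (z + u *: D + v *: E).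
  by col3_field.
apply; first by rewrite invr_ge0 ltW.
- by apply: divr_ge0; lra.
- by apply: divr_ge0; lra.
- by apply: divr_ge0; lra.
- by field.
Qed.

Section PlaneBasisDistinct.
Variable R : realType.
Variables d e : 'cV[int]_3.
Hypothesis hde : plane_lattice_basis R d e.

Lemma plane_basis_neq (x y : 'cV[int]_3) (s t : int) :
  s *: d + t *: e = x - y -> (s != 0) || (t != 0) -> x <> y.
Proof.
by move=> E st xy; move: E st; rewrite xy subrr => /(plane_basis_int_indep hde) [-> ->].
Qed.

Lemma T1_vertices_distinct :
  [/\ e <> d, e <> - d, - d - e <> d, - d - e <> - d & e <> - d - e].
Proof.
split.
- by apply: (@plane_basis_neq _ _ (-1) (1)) => //; col3_ring.
- by apply: (@plane_basis_neq _ _ (1) (1)) => //; col3_ring.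
- by apply: (@plane_basis_neq _ _ (-2) (-1)) => //; col3_ring.
- by apply: (@plane_basis_neq _ _ (0) (-1)) => //; col3_ring.
- by apply: (@plane_basis_neq _ _ (1) (2)) => //; col3_ring.
Qed.

Lemma T2_vertices_distinct : let f := - (2%:R *: d) - e in
  [/\ d <> e, - d <> e, d <> f, - d <> f & e <> f].
Proof.
split.
- by apply: (@plane_basis_neq _ _ (1) (-1)) => //; col3_ring.
- by apply: (@plane_basis_neq _ _ (-1) (-1)) => //; col3_ring.
- by apply: (@plane_basis_neq _ _ (3) (1)) => //; col3_ring.
- by apply: (@plane_basis_neq _ _ (1) (1)) => //; col3_ring.
- by apply: (@plane_basis_neq _ _ (2) (2)) => //; col3_ring.
Qed.

End PlaneBasisDistinct.

Lemma int_sign_squeeze (x y : int) : y != 0 -> 0 <= x * y -> 0 <= x * - y -> x = 0.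
Proof.
move=> y_neq0 ge0 le0; have /eqP : x * y = 0 by apply/eqP; rewrite eq_le ge0 -oppr_ge0 -mulrN le0.
by rewrite mulf_eq0 (negbTE y_neq0) orbF => /eqP.
Qed.

Section T2MeetsT1.
Variable R : realType.
Variable P : 'cV[R]_3 -> Prop.
Hypothesis hm : minimal_fano P.
Variables a b d e : 'cV[int]_3.
Hypothesis hde : plane_lattice_basis R d e.
Hypotheses (Pa : P (lat a)) (Pb : P (lat b)) (Pc : P (lat (- a - b))).
Hypotheses (vd : is_vertex P (lat d)) (ve : is_vertex P (lat e)).
Hypothesis vf : is_vertex P (lat (- (2%:R *: d) - e)).
Hypothesis L1_neq_L2 : ~ (det3 a b d = 0 /\ det3 a b e = 0).

Local Notation c := (- a - b).
Local Notation f := (- (2%:R *: d) - e).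

Lemma det3_T1 v : v \in [:: a; b; c] -> det3 a b v = 0.
Proof. by rewrite !inE => /or3P [] /eqP ->; rewrite /det3 ?mxE; ring. Qed.

Lemma det3_T1_f : det3 a b f = - 2 * det3 a b d - det3 a b e.
Proof. by rewrite /det3 !mxE; ring. Qed.

Lemma L1_no_split v x y : is_vertex P (lat v) -> v \notin [:: a; b; c] ->
  P (lat x) -> P (lat y) -> x <> v -> y <> v -> 0 <= det3 a b x * det3 a b y.
Proof.
rewrite !inE => hv /norP [/eqP av /norP [/eqP bv /eqP cv]] Px Py xv yv.
have no_split := T1_no_split hm Pa Pb Pc hv (nesym av) (nesym bv) (nesym cv).
rewrite leNgt; apply/negP => neg.
case: (ltrgt0P (det3 a b x)) => [hx|hx|hx]; last by rewrite hx mul0r ltxx in neg.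
- by rewrite pmulr_rlt0 // in neg; apply: (no_split _ _ Px Py xv yv hx).
- by rewrite nmulr_rlt0 // in neg; apply: (no_split _ _ Py Px yv xv neg hx).
Qed.

Lemma det3_T1_d : det3 a b d = 0.
Proof.
have [dne dne' dnf dnf' _] := T2_vertices_distinct hde.
have det3_md : det3 a b (- d) = - det3 a b d by rewrite /det3 !mxE; ring.
have by_vertex v : is_vertex P (lat v) -> v \notin [:: a; b; c] -> d <> v -> - d <> v ->
    det3 a b d = 0.
  move=> hv vT dv dv'.
  by have := L1_no_split hv vT vd.1 (T2_midpoint hm ve.1 vf.1) dv dv'; rewrite det3_md; nia.
have [eT|eT] := boolP (e \in [:: a; b; c]); last exact: by_vertex ve eT dne dne'.
have [fT|fT] := boolP (f \in [:: a; b; c]); last exact: by_vertex vf fT dnf dnf'.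
by move: (det3_T1 fT); rewrite det3_T1_f (det3_T1 eT); lia.
Qed.

Lemma det3_T1_e : det3 a b e != 0.
Proof. by apply/eqP => he; apply: L1_neq_L2; split=> //; exact: det3_T1_d. Qed.

Lemma det3_T1_f' : det3 a b f = - det3 a b e.
Proof. by rewrite det3_T1_f det3_T1_d mulr0 sub0r. Qed.

Lemma d_in_T1 : d \in [:: a; b; c].
Proof.
have [dne _ dnf _ _] := T2_vertices_distinct hde.
apply/negPn/negP => dT; have := L1_no_split vd dT ve.1 vf.1 (nesym dne) (nesym dnf).
by rewrite det3_T1_f'; move: det3_T1_e; nia.
Qed.

Lemma L1_but_e_f x : P (lat x) -> x <> e -> x <> f -> det3 a b x = 0.
Proof.
move=> Px xe xf; have [_ _ _ _ enf] := T2_vertices_distinct hde.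
have eT : e \notin [:: a; b; c] by apply: contra det3_T1_e => /det3_T1 ->.
have fT : f \notin [:: a; b; c].
  by apply: contra det3_T1_e => /det3_T1; rewrite det3_T1_f' => /eqP; rewrite oppr_eq0.
apply: (int_sign_squeeze det3_T1_e); first exact: L1_no_split vf fT Px ve.1 xf enf.
by rewrite -det3_T1_f'; exact: L1_no_split ve eT Px vf.1 xe (nesym enf).
Qed.

End T2MeetsT1.

Definition col3_seq (T : Type) (x : 'cV[T]_3) : seq T := [:: x ord0 ord0; x i1 ord0; x i2 ord0].

Definition mx_of_cols (T : comPzRingType) (x y z : 'cV[T]_3) : 'M[T]_3 :=
  \matrix_(i, j) nth 0 (nth [::] [:: col3_seq x; col3_seq y; col3_seq z] j) i.

Lemma det_mx3 (T : comPzRingType) (G : nat -> nat -> T) :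
  \det (\matrix_(i < 3, j < 3) G i j) =
    G 0 0 * (G 1 1 * G 2 2 - G 1 2 * G 2 1)
  - G 0 1 * (G 1 0 * G 2 2 - G 1 2 * G 2 0)
  + G 0 2 * (G 1 0 * G 2 1 - G 1 1 * G 2 0).
Proof.
rewrite (expand_det_row _ ord0) !big_ord_recr big_ord0 /= add0r.
rewrite /cofactor !(expand_det_row _ ord0) !big_ord_recr !big_ord0 /= !add0r.
by rewrite /cofactor !det_mx11 !mxE /= !expr0 ?expr1 /=; ring.
Qed.

Lemma det_mx_of_cols (T : comPzRingType) (x y z : 'cV[T]_3) :
  \det (mx_of_cols x y z) = det3 x y z.
Proof.
rewrite /mx_of_cols.
rewrite (det_mx3 (fun i j => nth 0 (nth [::] [:: col3_seq x; col3_seq y; col3_seq z] j) i)).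
by rewrite /det3 /=; ring.
Qed.

Lemma mx_of_cols_mul (x y z : 'cV[int]_3) (a b c : int) :
  mx_of_cols x y z *m vec3 a b c = a *: x + b *: y + c *: z.
Proof. by apply: col3P; rewrite !mxE !big_ord_recr big_ord0 /= !mxE /=; ring. Qed.

Definition lat_seq (R : realType) (s : seq 'cV[int]_3) (y : 'cV[R]_3) : Prop :=
  exists2 v, v \in s & y = lat v.

Lemma lat_mulmx (R : realType) (A : 'M[int]_3) (v : 'cV[int]_3) :
  (lat (A *m v) : 'cV[R]_3) = map_mx (fun z : int => z%:~R) A *m lat v.
Proof. by rewrite /lat map_mxM. Qed.

Lemma conv_lat_seq_mulmx (R : realType) (A : 'M[int]_3) (s : seq 'cV[int]_3)
    (x : 'cV[R]_3) :
  conv (lat_seq (map (mulmx A) s)) x <->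
  exists y, conv (lat_seq s) y /\ x = map_mx (fun z : int => z%:~R) A *m y.
Proof.
split.
  move=> [n [p [w [Sp [w0 [w1 ->]]]]]].
  have pt i : exists u, u \in s /\ p i = lat (A *m u).
    by have [v /mapP [u us ->] ->] := Sp i; exists u.
  have [u hu] := fin_all_exists pt.
  exists (\sum_i w i *: lat (u i)); split.
    by exists n, (fun i => lat (u i)), w; split=> // i; exists (u i); case: (hu i).
  rewrite mulmx_sumr; apply: eq_bigr => i _.
  by rewrite -scalemxAr -lat_mulmx; case: (hu i) => _ ->.
move=> [y [[n [p [w [Sp [w0 [w1 ->]]]]]] ->]].
exists n, (fun i => map_mx (fun z : int => z%:~R) A *m p i), w; split.
  by move=> i; have [v vs ->] := Sp i; exists (A *m v); [exact: map_f|rewrite lat_mulmx].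
split=> //; split=> //.
by rewrite mulmx_sumr; apply: eq_bigr => i _; rewrite -scalemxAr.
Qed.

Section T1ContainsD.
Variable R : realType.
Variable P : 'cV[R]_3 -> Prop.
Hypothesis hm : minimal_fano P.
Variables d b e : 'cV[int]_3.
Hypotheses (hdb : plane_lattice_basis R d b) (hde : plane_lattice_basis R d e).
Hypotheses (vd : is_vertex P (lat d)) (vb : is_vertex P (lat b)).
Hypothesis vc : is_vertex P (lat (- d - b)).
Hypotheses (Pe : P (lat e)) (Pf : P (lat (- (2%:R *: d) - e))).
Hypothesis L1_but_e_f : forall x, P (lat x) -> x <> e -> x <> - (2%:R *: d) - e ->
  det3 d b x = 0.
Hypothesis det3_d_b_e : det3 d b e != 0.

Local Notation c := (- d - b).
Local Notation f := (- (2%:R *: d) - e).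

Lemma det3_d_e_b : det3 d e b != 0.
Proof. by rewrite det3C12 oppr_eq0 -det3_cycle. Qed.

Lemma det3_d_e_c : det3 d e c = - det3 d e b.
Proof. by rewrite /det3 !mxE; ring. Qed.

Lemma L2_no_split v x y : is_vertex P (lat v) -> [/\ d <> v, - d <> v, e <> v & f <> v] ->
  P (lat x) -> P (lat y) -> x <> v -> y <> v -> 0 <= det3 d e x * det3 d e y.
Proof.
move=> hv [dv dv' ev fv] Px Py xv yv.
have no_split := T2_no_split hm vd.1 Pe Pf hv dv dv' ev fv.
rewrite leNgt; apply/negP => neg.
case: (ltrgt0P (det3 d e x)) => [hx|hx|hx]; last by rewrite hx mul0r ltxx in neg.
- by rewrite pmulr_rlt0 // in neg; apply: (no_split _ _ Px Py xv yv hx).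
- by rewrite nmulr_rlt0 // in neg; apply: (no_split _ _ Py Px yv xv neg hx).
Qed.

Lemma T1_off_T2 : [/\ d <> b, - d <> b, e <> b & f <> b] /\
  [/\ d <> c, - d <> c, e <> c & f <> c].
Proof.
have [bd bd' cd cd' _] := T1_vertices_distinct hdb.
have det3_d_b_f : det3 d b f = - det3 d b e by rewrite /det3 !mxE; ring.
have off_L1 x : det3 d b x = 0 -> e <> x /\ f <> x.
  move=> hx; split=> [ex|fx]; first by move: det3_d_b_e; rewrite ex hx eqxx.
  by move: det3_d_b_e; rewrite -oppr_eq0 -det3_d_b_f fx hx eqxx.
have [eb fb] : e <> b /\ f <> b by apply: off_L1; rewrite /det3; ring.
have [ec fc] : e <> c /\ f <> c by apply: off_L1; rewrite /det3 !mxE; ring.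
by split; split=> //; apply: nesym.
Qed.

Lemma L2_but_b_c x : P (lat x) -> x <> b -> x <> c -> det3 d e x = 0.
Proof.
move=> Px xb xc; have [bT cT] := T1_off_T2.
have [_ _ _ _ bc] := T1_vertices_distinct hdb.
apply: (int_sign_squeeze det3_d_e_b).
  by apply: L2_no_split vc cT Px vb.1 xc bc.
by rewrite -det3_d_e_c; apply: L2_no_split vb bT Px vc.1 xb (nesym bc).
Qed.

Lemma P_origin : P 0.
Proof. exact: (T1_centroid hm (a := d) (b := b) vd.1 vb.1 vc.1). Qed.

Lemma d_neq0 : d <> 0.
Proof. by apply: (plane_basis_neq hdb (s := 1) (t := 0)) => //; col3_ring. Qed.

Lemma multiple_d_le1 (m : int) : P (lat (m *: d)) -> m <= 1.
Proof.
move=> Pmd; rewrite leNgt; apply/negP => m_gt1.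
have m_gt0 : (0 : R) < m%:~R by rewrite ltr0z; lia.
have inv_lt1 : (m%:~R : R)^-1 < 1 by rewrite invf_lt1 // ltr1z.
have Ed : (lat d : 'cV[R]_3) = m%:~R^-1 *: lat (m *: d) + (1 - m%:~R^-1) *: 0.
  by rewrite latZ scaler0 addr0 scalerA mulVf ?gt_eqF // scale1r.
have inv_gt0 : 0 < (m%:~R : R)^-1 by rewrite invr_gt0.
have := vd.2 _ _ _ Pmd P_origin inv_gt0 inv_lt1 Ed.
rewrite latZ => /eqP; rewrite scaler_eq0 (gt_eqF m_gt0) /=.
by rewrite -(lat0 R) => /eqP /lat_inj; exact: d_neq0.
Qed.

(* Otherwise -2d is in P, and -d would be interior: P contains
   -d ± (e + d) = e, f and -d ± d = 0, -2d, while b, c lie on both sides. *)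
Lemma multiple_d_ge_m1 (m : int) : P (lat (m *: d)) -> -1 <= m.
Proof.
move=> Pmd; rewrite leNgt; apply/negP => m_lt.
have m_le : (m%:~R : R) <= -2.
  by have : m%:~R <= (-2 : int)%:~R :> R by rewrite ler_int; lia.
set D := (lat d : 'cV[R]_3).
have P2d : P (- D - D).
  have -> : - D - D = (2 / - m%:~R) *: lat (m *: d) + (1 - 2 / - m%:~R) *: (0 : 'cV[R]_3).
    by rewrite latZ scaler0 addr0 scalerA; apply: col3P; rewrite !mxE; field; apply/eqP; lra.
  apply: convex_comb2 (minimal_fano_convex hm) Pmd P_origin _ _ _.
  - by apply: divr_ge0; lra.
  - by rewrite subr_ge0 ler_pdivrMr; lra.
  - by rewrite addrC subrK.
have Pe' : P (- D + (lat e + D)) by rewrite addrC addrK.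
have Pf' : P (- D - (lat e + D)) by rewrite (_ : _ - _ = lat f) // lat_T2; col3_ring.
have P0' : P (- D + D) by rewrite addNr; exact: P_origin.
have Pb' : P (- D + (lat b + D)) by rewrite addrC addrK; exact: vb.1.
have Pc' : P (- D + (lat c + D)) by rewrite addrC addrK; exact: vc.1.
have det_b : det3 (lat e + D) D (lat b + D) = - (det3 d e b)%:~R.
  by rewrite -det3_lat /det3 !mxE; ring.
have det_c : det3 (lat e + D) D (lat c + D) = (det3 d e b)%:~R.
  by rewrite -det3_lat /det3 !mxE; ring.
have frame := frame_interior (minimal_fano_convex hm) Pe' Pf' P0' P2d.
have : interior3 P (lat (- d)).
  rewrite latN; case: (ltrgt0P (det3 d e b)) => G.
  - by apply: frame Pc' Pb' _ _; rewrite ?det_b ?det_c ?oppr_lt0 ltr0z.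
  - by apply: frame Pb' Pc' _ _; rewrite ?det_b ?det_c ?oppr_gt0 ltrz0.
  - by move: det3_d_e_b; rewrite G eqxx.
by move/(hm.1.2 (- d)).1/eqP; rewrite oppr_eq0 => /eqP; exact: d_neq0.
Qed.

Lemma lattice_pts_cases x : P (lat x) -> x \in [:: d; e; f; b; c; - d; 0].
Proof.
move=> Px; rewrite !inE.
have [->|/eqP xe] := eqVneq x e; first by rewrite !orbT.
have [->|/eqP xf] := eqVneq x f; first by rewrite !orbT.
have [->|/eqP xb] := eqVneq x b; first by rewrite !orbT.
have [->|/eqP xc] := eqVneq x c; first by rewrite !orbT.
have [m [n x_eq]] := plane_basis_coords hdb (L1_but_e_f Px xe xf).
have n0 : n = 0.
  move: (L2_but_b_c Px xb xc); rewrite x_eq.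
  have -> : det3 d e (m *: d + n *: b) = n * det3 d e b by rewrite /det3 !mxE; ring.
  by move/eqP; rewrite mulf_eq0 (negbTE det3_d_e_b) orbF => /eqP.
move: Px; rewrite x_eq n0 scale0r addr0 => Pmd.
have [m_ge m_le] := (multiple_d_ge_m1 Pmd, multiple_d_le1 Pmd).
have [->|[->|->]] : m = -1 \/ m = 0 \/ m = 1 by lia.
- by rewrite scaleN1r eqxx !orbT.
- by rewrite scale0r eqxx !orbT.
- by rewrite scale1r eqxx.
Qed.

Lemma scaled_T2_pt (z x : 'cV[int]_3) (u v K : int) : P (lat z) -> 1 <= K ->
  in_scaled_T2 K u v -> K *: x = u *: d + v *: e + z -> P (lat x).
Proof.
move=> Pz K1 [h1 h2 h3] Kx.
have K1' : (1 : R) <= K%:~R by rewrite ler1z.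
have K_neq0 : (K%:~R : R) != 0 by apply/eqP; lra.
have -> : (lat x : 'cV[R]_3) = K%:~R^-1 *: (lat z + u%:~R *: lat d + v%:~R *: lat e).
  apply: (scalerI K_neq0); rewrite scalerA mulfV // scale1r -[K%:~R *: lat x]latZ Kx.
  by rewrite !latD !latZ; col3_ring.
apply: conv_scaled_T2 (minimal_fano_convex hm) Pz vd.1 Pe _ K1' _ _ _; first by rewrite -lat_T2.
- have : (u + v)%:~R <= (K - 1)%:~R :> R by rewrite ler_int.
  by rewrite intrD intrB.
- have : (v - u)%:~R <= (K - 1)%:~R :> R by rewrite ler_int.
  by rewrite !intrB.
- have : (u - 3 * v)%:~R <= (K - 1)%:~R :> R by rewrite ler_int.
  by rewrite !intrB intrM.
Qed.

Lemma off_L2_cases x : P (lat x) -> det3 d e x != 0 -> x = b \/ x = c.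
Proof.
move=> Px; case: (eqVneq x b) => [->|/eqP xb]; first by left.
case: (eqVneq x c) => [->|/eqP xc]; first by right.
by rewrite (L2_but_b_c Px xb xc) eqxx.
Qed.

(* b = p d + q e + K g with det(d, e, g) = ±1 and K >= 2: one of the points
   (X d + Y e ± g) lies in conv{b or c, d, e, f} by [scaled_T2_cover], is a
   lattice point off L2, and has determinant ±1, neither ±K. *)
Lemma det3_d_e_b_not_large (g : 'cV[int]_3) (s p q K : int) :
  s = 1 \/ s = -1 -> det3 d e g = s -> 2 <= K -> b = p *: d + q *: e + K *: g -> False.
Proof.
move=> s_pm det_g K2 b_eq.
have K1 : 1 <= K by lia.
have det_b : det3 d e b = K * s by rewrite -det_g b_eq /det3 !mxE; ring.
have det_c : det3 d e c = - (K * s) by rewrite det3_d_e_c det_b.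
have contra x : P (lat x) -> det3 d e x = s \/ det3 d e x = - s -> False.
  move=> Px det_x; have x_off : det3 d e x != 0 by case: det_x => ->; case: s_pm => ->.
  by case: (off_L2_cases Px x_off) det_x => ->; rewrite ?det_b ?det_c; case: s_pm => ->; lia.
case: (scaled_T2_cover p q K2) => [[X [Y hXY]]|[X [Y hXY]]].
- apply: (contra (X *: d + Y *: e + g)); last by left; rewrite -det_g /det3 !mxE; ring.
  by apply: (scaled_T2_pt vb.1 K1 hXY); rewrite b_eq; col3_ring.
- apply: (contra (X *: d + Y *: e - g)); last by right; rewrite -det_g /det3 !mxE; ring.
  by apply: (scaled_T2_pt vc.1 K1 hXY); rewrite b_eq; col3_ring.
Qed.

Lemma det3_d_e_b_unit : det3 d e b = 1 \/ det3 d e b = -1.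
Proof.
have [g0 det_g0] := plane_basis_complete hde.
set G := det3 d e b.
have [s [K [s_pm K1 G_sK]]] : exists s K : int, [/\ s = 1 \/ s = -1, 1 <= K & G = K * s].
  case: (ltrgt0P G) => G0.
  - by exists 1, G; split; [left|lia|lia].
  - by exists (-1), (- G); split; [right|lia|lia].
  - by move: det3_d_e_b; rewrite -/G G0 eqxx.
have det_g : det3 d e (s *: g0) = s by rewrite -[RHS]mulr1 -det_g0 /det3 !mxE; ring.
have [p [q b_eq]] : exists p q : int, b - K *: (s *: g0) = p *: d + q *: e.
  apply: (plane_basis_coords hde).
  have -> : det3 d e (b - K *: (s *: g0)) = G - K * det3 d e (s *: g0).
    by rewrite /G /det3 !mxE; ring.
  by rewrite det_g G_sK subrr.
have [K_eq1|K2] : K = 1 \/ 2 <= K by lia.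
  by rewrite G_sK K_eq1 mul1r.
by case: (det3_d_e_b_not_large s_pm det_g K2 (q := q) (p := p)); rewrite -b_eq subrK.
Qed.

Lemma P_conv_vertices x : P x <-> conv (lat_seq [:: d; e; b; f; c]) x.
Proof.
have in_hull v : v \in [:: d; e; b; f; c] ->
    conv (lat_seq [:: d; e; b; f; c]) (lat v : 'cV[R]_3).
  by move=> vs; apply: sub_conv; exists v.
have hull_convex := @conv_convex R (lat_seq [:: d; e; b; f; c]).
split; last first.
  apply: (conv_sub_convex (minimal_fano_convex hm)) => y [v].
  rewrite !inE => /predU1P [->|/predU1P [->|/predU1P [->|/predU1P [->|/eqP->]]]] ->;
    [exact: vd.1|exact: Pe|exact: vb.1|exact: Pf|exact: vc.1].
have [s hs] := hm.1.1.
move=> /hs; apply: (conv_sub_convex hull_convex) => y [v vs ->].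
have Pv : P (lat v) by apply/hs; apply: sub_conv; exists v.
have := lattice_pts_cases Pv; rewrite !inE.
move=> /predU1P [->|/predU1P [->|/predU1P [->|/predU1P [->|/predU1P [->|/predU1P [->|/eqP->]]]]]];
  try by apply: in_hull; rewrite !inE eqxx ?orbT.
- have -> : (lat (- d) : 'cV[R]_3) = 2^-1 *: lat e + 2^-1 *: lat f.
    by rewrite lat_T2 latN; col3_field.
  by apply: convex_mid hull_convex _ _; apply: in_hull; rewrite !inE eqxx ?orbT.
- have -> : (lat 0 : 'cV[R]_3) = 3^-1 *: lat d + 3^-1 *: lat b + 3^-1 *: lat c.
    by rewrite lat0 latB; col3_field.
  by apply: (convex_comb3 hull_convex); rewrite ?invr_ge0 ?ler0n //;
    [apply: in_hull; rewrite !inE eqxx ?orbT..|field].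
Qed.

Lemma GL3Z_equiv_P0 : GL3Z_equiv P P0.
Proof.
exists (mx_of_cols d e b); split.
  rewrite unitmxE det_mx_of_cols.
  by case: det3_d_e_b_unit => ->; [exact: unitr1|exact: unitrN1].
have vertices_eq : [:: d; e; b; f; c] = map (mulmx (mx_of_cols d e b)) P0_cols.
  by rewrite /= !mx_of_cols_mul; congr [:: _; _; _; _; _]; col3_ring.
by move=> x; rewrite P_conv_vertices vertices_eq; exact: conv_lat_seq_mulmx.
Qed.

End T1ContainsD.

Lemma T1_rot (a b : 'cV[int]_3) : - b - (- a - b) = a.
Proof. col3_ring. Qed.

Lemma det3_T1_rot (a b x : 'cV[int]_3) : det3 b (- a - b) x = det3 a b x.
Proof. by rewrite /det3 !mxE; ring. Qed.

Theorem lemma4p12 (R : realType) (P : 'cV[R]_3 -> Prop)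
    (u1 w1 u2 w2 : 'cV[int]_3) :
  minimal_fano P ->
  plane_lattice_basis R u1 w1 ->
  is_vertex P (lat u1) -> is_vertex P (lat w1) -> is_vertex P (lat (- u1 - w1)) ->
  plane_lattice_basis R u2 w2 ->
  is_vertex P (lat u2) -> is_vertex P (lat w2) ->
  is_vertex P (lat (- (2%:R *: u2) - w2)) ->
  ~ (forall x : 'cV[R]_3, span2 (lat u1) (lat w1) x <-> span2 (lat u2) (lat w2) x) ->
  GL3Z_equiv P P0.
Proof.
move=> hm hab va vb vc hde vd ve vf planes_neq.
have L1_neq_L2 := distinct_planes_det3 hab hde planes_neq.
have L1 := L1_but_e_f hm hde va.1 vb.1 vc.1 vd ve vf L1_neq_L2.
have e_off_L1 := det3_T1_e hm hde va.1 vb.1 vc.1 vd ve vf L1_neq_L2.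
have by_T1_vertex (d b : 'cV[int]_3) : plane_lattice_basis R d b -> is_vertex P (lat d) ->
    is_vertex P (lat b) -> is_vertex P (lat (- d - b)) ->
    (forall x, det3 d b x = det3 u1 w1 x) -> u2 = d -> GL3Z_equiv P P0.
  move=> hdb vd' vb' vc' det_eq d_eq; rewrite d_eq in hde ve vf L1 e_off_L1.
  apply: (GL3Z_equiv_P0 hm hdb hde vd' vb' vc' ve.1 vf.1); last by rewrite det_eq.
  by move=> x Px xe xf; rewrite det_eq; exact: L1.
move: (d_in_T1 hm hde va.1 vb.1 vc.1 vd ve vf L1_neq_L2); rewrite !inE.
case/or3P => /eqP d_eq.
- exact: by_T1_vertex _ _ hab va vb vc (fun x => erefl) d_eq.
- apply: by_T1_vertex _ _ (plane_basis_rot hab) vb vc _ (@det3_T1_rot _ _) d_eq.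
  by rewrite T1_rot.
- have hca := plane_basis_rot (plane_basis_rot hab); rewrite T1_rot in hca.
  have vb' : is_vertex P (lat (- (- u1 - w1) - u1)).
    by rewrite (_ : - (- u1 - w1) - u1 = w1) //; col3_ring.
  apply: by_T1_vertex _ _ hca vc va vb' _ d_eq.
  by move=> x; rewrite /det3 !mxE; ring.
Qed.
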